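(* Let $(U,\mathcal{I})$ be a downward-closed set system (with $U$ finite) that is not a matroid. Then there exist a set $V\subseteq U$ and an element $x\in V$ such that the revenue of the VCG mechanism on bid profile $\mathbb{1}[V\setminus\{x\}]$ exceeds the revenue of the VCG mechanism on bid profile $\mathbb{1}[V]$.
   Context: Bidders are the elements of $U$, and $\mathcal{I}$ is the feasibility constraint (sets of bidders that may simultaneously win). A set system with $\emptyset\in\mathcal{I}$ is downward-closed if subsets of members are members, and a matroid if moreover whenever $A,B\in\mathcal{I}$ with $|A|>|B|$ there is $x\in A\setminus B$ with $B\cup\{x\}\in\mathcal{I}$. For $S\subseteq U$, $\mathbb{1}[S]$ denotes the bid profile in which each bidder in $S$ bids $1$ and each bidder in $U\setminus S$ bids $0$. The (single-parameter) VCG mechanism selects as winners a feasible set maximizing the total bid (with ties broken arbitrarily), and charges each winner its critical bid, i.e. the infimum of bids at which it would still belong to a maximum-total-bid feasible set with the other bids fixed (equivalently its VCG externality); losers pay $0$. Revenue is the sum of payments. *)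

From mathcomp Require Import all_boot.
Set Implicit Arguments. Unset Strict Implicit. Unset Printing Implicit Defensive.

Section VCG.
Variable U : finType.

Definition downward_closed (I : {set {set U}}) : Prop :=
  set0 \in I /\ forall A B : {set U}, A \in I -> B \subset A -> B \in I.

Definition is_matroid (I : {set {set U}}) : Prop :=
  downward_closed I /\
  forall A B : {set U}, A \in I -> B \in I -> #|B| < #|A| ->
    exists2 x, x \in A :\: B & x |: B \in I.

Definition ind_profile (S : {set U}) : U -> nat := fun u => nat_of_bool (u \in S).

Definition welfare (b : U -> nat) (A : {set U}) : nat := \sum_(u in A) b u.

(* W is a possible VCG winner set: a feasible set of maximum total bid
   (ties broken arbitrarily). *)
Definition vcg_winners (I : {set {set U}}) (b : U -> nat) (W : {set U}) : Prop :=
  W \in I /\ forall A, A \in I -> welfare b A <= welfare b W.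

Definition opt_without (I : {set {set U}}) (b : U -> nat) (i : U) : nat :=
  \max_(A in I | i \notin A) welfare b A.

Definition vcg_payment (I : {set {set U}}) (b : U -> nat) (W : {set U}) (i : U) : nat :=
  opt_without I b i - (welfare b W - b i).

Definition vcg_revenue (I : {set {set U}}) (b : U -> nat) (W : {set U}) : nat :=
  \sum_(i in W) vcg_payment I b W i.

End VCG.

From mathcomp Require Import all_boot.
From mathcomp Require Import zify.
From Stdlib Require Import Classical.
Set Implicit Arguments. Unset Strict Implicit. Unset Printing Implicit Defensive.

(* For any bids, a VCG winner pays its bid unless it lies in
   every welfare-maximizing feasible set ("critical"), in which case it pays
   at least one less.  Hence for a 0/1 profile 1[S] over a downward-closed
   system the revenue is tie-breaking independent:
       revenue(S) + #|critical(S)| = OPT(S).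
   A set system that is not a matroid contains a set with a maximal feasible
   subset B smaller than some feasible subset A; take such a set V that is
   inclusion-minimal.  Then #|V \ B| >= 2, every bidder of V \ B is critical
   for 1[V], and for x in V \ B minimality gives OPT(V \ x) = #|B| and
   critical(V \ x) is contained in B ∩ critical(V).  Since dropping one bidder
   lowers OPT by at most one, the revenue formula yields
   revenue(V) <= #|B| - 1 - #|critical(V \ x)| < revenue(V \ x). *)

Lemma exists_minimal (T : finType) (P : {set T} -> Prop) (S : {set T}) :
  P S -> exists2 V, P V & forall S' : {set T}, S' \proper V -> ~ P S'.
Proof.
have [n] := ubnP #|S|; elim: n S => // n IH S /ltnSE hS hPS.
have [[S' hS' hPS'] | noSmaller] := classic (exists2 S' : {set T}, S' \proper S & P S').
- by apply: (IH S') => //; apply: leq_trans (proper_card hS') hS.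
- by exists S => // S' hS' hPS'; apply: noSmaller; exists S'.
Qed.

Section VCGPayments.
Variables (U : finType) (I : {set {set U}}) (b : U -> nat).

Definition opt_welfare : nat := \max_(A in I) welfare b A.

Definition critical : {set U} :=
  [set i | [forall A in I, (opt_welfare <= welfare b A) ==> (i \in A)]].

Lemma criticalP i :
  reflect (forall A, A \in I -> opt_welfare <= welfare b A -> i \in A)
          (i \in critical).
Proof.
rewrite inE; apply: (iffP forall_inP) => crit A hA; first exact/implyP/crit.
exact/implyP/crit.
Qed.

Lemma welfare_le_opt A : A \in I -> welfare b A <= opt_welfare.
Proof. by move=> hA; apply: leq_bigmax_cond. Qed.

Lemma vcg_winners_opt W : vcg_winners I b W -> welfare b W = opt_welfare.
Proof.
move=> [hW Wmax]; apply/eqP; rewrite eqn_leq welfare_le_opt //.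
by apply/bigmax_leqP => A /Wmax.
Qed.

Lemma opt_without_le i : opt_without I b i <= opt_welfare.
Proof. by apply/bigmax_leqP => A /andP[hA _]; apply: welfare_le_opt. Qed.

Lemma bid_le_opt W i : vcg_winners I b W -> i \in W -> b i <= opt_welfare.
Proof.
by move=> hW hi; rewrite -(vcg_winners_opt hW) /welfare (bigD1 i) //= leq_addr.
Qed.

Lemma payment_le_bid W i :
  vcg_winners I b W -> i \in W -> vcg_payment I b W i <= b i.
Proof.
move=> hW hi; have := bid_le_opt hW hi; have := opt_without_le i.
rewrite /vcg_payment (vcg_winners_opt hW); lia.
Qed.

(* Without a critical bidder the optimum strictly drops, so it pays at
   most its bid minus one. *)
Lemma payment_critical W i :
  vcg_winners I b W -> i \in critical -> vcg_payment I b W i <= b i - 1.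
Proof.
move=> hW /criticalP crit.
have drop : opt_without I b i <= opt_welfare - 1.
  apply/bigmax_leqP => A /andP[hA hiA]; rewrite leqNgt; apply/negP => big.
  by rewrite crit // in hiA; lia.
rewrite /vcg_payment (vcg_winners_opt hW); lia.
Qed.

(* Some optimal set avoids a non-critical bidder, so it pays its full bid. *)
Lemma payment_noncritical W i :
  vcg_winners I b W -> i \in W -> i \notin critical -> vcg_payment I b W i = b i.
Proof.
move=> hW hi; rewrite inE negb_forall_in => /existsP[A].
rewrite negb_imply => /andP[hA /andP[optA hiA]].
have avoid : opt_welfare <= opt_without I b i.
  by apply: leq_trans optA _; apply: leq_bigmax_cond; rewrite hA hiA.
apply/eqP; rewrite eqn_leq payment_le_bid //.
by move: avoid (bid_le_opt hW hi); rewrite /vcg_payment (vcg_winners_opt hW); lia.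
Qed.

End VCGPayments.

Lemma feasible_setI (U : finType) (I : {set {set U}}) (A S : {set U}) :
  downward_closed I -> A \in I -> A :&: S \in I.
Proof. by case=> _ down hA; apply: down hA (subsetIl A S). Qed.

Lemma welfare_ind (U : finType) (S T : {set U}) :
  welfare (ind_profile S) T = #|T :&: S|.
Proof.
rewrite /welfare /ind_profile -sum1_card.
rewrite (eq_bigr (fun u => if u \in S then 1 else 0)); last by move=> u _; case: (u \in S).
by rewrite -big_mkcondr; apply: eq_bigl => u; rewrite inE.
Qed.

Section UnitBids.
Variables (U : finType) (I : {set {set U}}).

Local Notation opt S := (opt_welfare I (ind_profile S)).
Local Notation crit S := (critical I (ind_profile S)).

Lemma card_le_opt S A : A \in I -> #|A :&: S| <= opt S.
Proof. by rewrite -welfare_ind; apply: welfare_le_opt. Qed.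

Lemma opt_le S n : (forall A, A \in I -> #|A :&: S| <= n) -> opt S <= n.
Proof. by move=> bound; apply/bigmax_leqP => A /bound; rewrite welfare_ind. Qed.

Lemma opt_remove_le S x : opt S <= opt (S :\ x) + 1.
Proof.
apply: opt_le => A hA; apply: leq_trans (leq_add (card_le_opt (S :\ x) hA) (leqnn 1)).
by rewrite (cardsD1 x (A :&: S)) setIDA addnC leq_add2l leq_b1.
Qed.

Hypothesis dcI : downward_closed I.

(* Critical bidders are winners bidding 1, since W :&: S is again optimal. *)
Lemma critical_sub_winners S W :
  vcg_winners I (ind_profile S) W -> crit S \subset W :&: S.
Proof.
move=> hW; apply/subsetP => i /criticalP; apply.
  by apply: feasible_setI; case: hW.
by rewrite -(vcg_winners_opt hW) !welfare_ind -setIA setIid.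
Qed.

(* The revenue formula: non-critical winners in S pay 1, everybody else 0. *)
Lemma revenue_unit S W :
  vcg_winners I (ind_profile S) W ->
  vcg_revenue I (ind_profile S) W + #|crit S| = opt S.
Proof.
move=> hW.
have pay i : i \in W ->
    vcg_payment I (ind_profile S) W i = ind_profile (S :\: crit S) i.
  move=> hi; rewrite [RHS]/ind_profile in_setD.
  have [iC | iNC] := boolP (i \in crit S) => /=; last exact: payment_noncritical.
  apply/eqP; rewrite -leqn0; apply: leq_trans (payment_critical hW iC) _.
  by rewrite /ind_profile; case: (i \in S).
rewrite /vcg_revenue (eq_bigr _ pay) -/(welfare _ W) welfare_ind.
rewrite -(vcg_winners_opt hW) welfare_ind setIDA.
by rewrite -(cardsID (crit S) (W :&: S)) (setIidPr (critical_sub_winners hW)) addnC.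
Qed.

End UnitBids.

Section UnequalBases.
Variables (U : finType) (I : {set {set U}}).

Definition maximal_in (S B : {set U}) : Prop :=
  [/\ B \in I, B \subset S & forall y, y \in S :\: B -> y |: B \notin I].

Definition unequal_bases (S : {set U}) : Prop :=
  exists B A, maximal_in S B /\ [/\ A \in I, A \subset S & #|B| < #|A|].

Lemma maximal_in_sub (S S' B : {set U}) :
  maximal_in S B -> B \subset S' -> S' \subset S -> maximal_in S' B.
Proof.
move=> [hB _ maxB] BS' S'S; split => // y; rewrite inE => /andP[yB yS'].
by apply: maxB; rewrite inE yB (subsetP S'S).
Qed.

(* A failed exchange between feasible A and smaller B gives unequal bases
   in A :|: B. *)
Lemma not_matroid_unequal_bases :
  downward_closed I -> ~ is_matroid I -> exists S, unequal_bases S.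
Proof.
move=> dcI notM; apply: NNPP => noS; apply: notM; split => // A B hA hB hBA.
apply: NNPP => noX; apply: noS; exists (A :|: B), B, A.
split; last by rewrite subsetUl.
split; rewrite ?subsetUr // => y; rewrite !inE => /andP[yB yAB].
apply/negP => yBI; apply: noX; exists y => //.
by rewrite inE yB; case/orP: yAB => // yB'; rewrite yB' in yB.
Qed.

End UnequalBases.

Section MinimalWitness.
Variables (U : finType) (I : {set {set U}}) (V B A : {set U}) (x : U).
Hypothesis dcI : downward_closed I.
Hypothesis maxB : maximal_in I V B.
Hypotheses (hA : A \in I) (AV : A \subset V) (BA : #|B| < #|A|).

Local Notation opt S := (opt_welfare I (ind_profile S)).
Local Notation crit S := (critical I (ind_profile S)).

(* If V \ B were a single element, B would be contained in A and could be
   extended inside A. *)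
Lemma two_outside_basis : 1 < #|V :\: B|.
Proof.
case: maxB => hB _ maxB'; rewrite ltnNge; apply/negP => small.
have AB_small : #|A :\: B| <= 1.
  by apply: leq_trans small; apply: subset_leq_card; apply: setSD.
have AB_le := subset_leq_card (subsetIr A B); have partA := cardsID B A.
have BsubA : B \subset A.
  have /eqP <- : A :&: B == B by rewrite eqEcard subsetIr /=; lia.
  exact: subsetIl.
have [v] : exists v, v \in A :\: B by apply/set0Pn; rewrite -card_gt0; lia.
rewrite inE => /andP[vB vA].
have vVB : v \in V :\: B by rewrite inE vB (subsetP AV).
have : v |: B \in I by case: dcI => _ down; apply: down hA _; rewrite subUset sub1set vA.
by rewrite (negbTE (maxB' v vVB)).
Qed.

Hypothesis minV : forall S : {set U}, S \proper V -> ~ unequal_bases I S.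

(* An optimal set avoiding v in V \ B would, together with B, form a
   smaller witness. *)
Lemma outside_basis_critical : V :\: B \subset crit V.
Proof.
case: (maxB) => hB BV _; apply/subsetP => v; rewrite inE => /andP[vB vV].
apply/criticalP => T hT optT; apply/negPn/negP => vT.
apply: (minV (S := (T :&: V) :|: B)).
  rewrite properE subUset subsetIr BV /=; apply/subsetPn; exists v => //.
  by rewrite !inE (negbTE vT) (negbTE vB).
exists B, (T :&: V); split.
  by apply: (maximal_in_sub maxB (subsetUr _ _)); rewrite subUset subsetIr BV.
split; [exact: feasible_setI | exact: subsetUl | ].
rewrite welfare_ind in optT; apply: (leq_trans BA); apply: leq_trans optT.
by have := card_le_opt V hA; rewrite (setIidPl AV).
Qed.

(* The critical bidders of V include the (at least two) bidders of V \ B,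
   none of which is in B. *)
Lemma critical_outside_card : #|crit V :&: B| + 2 <= #|crit V|.
Proof.
rewrite -(cardsID B (crit V)) leq_add2l; apply: leq_trans two_outside_basis _.
apply: subset_leq_card; apply/subsetP => v vVB.
by rewrite inE (subsetP outside_basis_critical v vVB); case/setDP: vVB => _ ->.
Qed.

Hypothesis hx : x \in V :\: B.

Lemma basis_sub_removed : B \subset V :\ x.
Proof.
case: maxB => _ BV _; apply/subsetP => u uB; rewrite in_setD1 (subsetP BV) // andbT.
by apply: contraTneq hx => <-; rewrite inE uB.
Qed.

(* B stays maximal in V \ x, and minimality forbids anything larger. *)
Lemma opt_remove_outside : opt (V :\ x) = #|B|.
Proof.
case: (maxB) => hB _ _; apply/eqP; rewrite eqn_leq; apply/andP; split.
  apply: opt_le => T hT; rewrite leqNgt; apply/negP => big.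
  apply: (minV (properD1 (setDP hx).1)); exists B, (T :&: (V :\ x)).
  split; first exact: (maximal_in_sub maxB basis_sub_removed (subD1set V x)).
  by split; [exact: feasible_setI | exact: subsetIr | ].
by have := card_le_opt (V :\ x) hB; rewrite (setIidPl basis_sub_removed).
Qed.

(* Critical bidders for V \ x lie in the optimal set B, and an optimal set
   for V loses at most x, so it remains optimal for V \ x. *)
Lemma critical_remove_outside : crit (V :\ x) \subset crit V :&: B.
Proof.
case: (maxB) => hB _ _; apply/subsetP => i /criticalP crit_i; rewrite inE.
apply/andP; split; last first.
  apply: crit_i => //.
  by rewrite welfare_ind opt_remove_outside (setIidPl basis_sub_removed).
apply/criticalP => T hT optT; apply: crit_i => //.
rewrite welfare_ind opt_remove_outside; rewrite welfare_ind in optT.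
have := card_le_opt V hA; rewrite (setIidPl AV) => A_le.
rewrite (cardsD1 x (T :&: V)) -setIDA in optT; case: (x \in _) optT => /=; lia.
Qed.

End MinimalWitness.

Theorem mainTheorem8 (U : finType) (I : {set {set U}}) :
  downward_closed I -> ~ is_matroid I ->
  exists (V : {set U}) (x : U), x \in V /\
    forall W1 W2 : {set U},
      vcg_winners I (ind_profile (V :\ x)) W1 ->
      vcg_winners I (ind_profile V) W2 ->
      vcg_revenue I (ind_profile V) W2 < vcg_revenue I (ind_profile (V :\ x)) W1.
Proof.
move=> dcI notM; have [S0 witness] := not_matroid_unequal_bases dcI notM.
have [V [B [A [maxB [hA AV BA]]]] minV] := exists_minimal witness.
have [x hx] : exists x, x \in V :\: B.
  by apply/set0Pn; rewrite -card_gt0 ltnW // (two_outside_basis dcI maxB hA AV BA).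
exists V, x; split; first by case/setDP: hx.
move=> W1 W2 hW1 hW2.
have rev_removed := revenue_unit dcI hW1; have rev_full := revenue_unit dcI hW2.
have opt_drop := opt_remove_le I V x.
rewrite (opt_remove_outside dcI maxB minV hx) in rev_removed opt_drop.
have crit_removed := subset_leq_card (critical_remove_outside dcI maxB hA AV BA minV hx).
have crit_full := critical_outside_card dcI maxB hA AV BA minV.
lia.
Qed.
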